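(* Let $(D,\prec,\succ,\alpha)$ and $(D',\prec',\succ',\alpha')$ be Hom-dendriform algebras, let $(D',\prec_l,\succ_l,\prec_r,\succ_r,\alpha')$ be an action of $D$ on $D'$, and let $T:D'\to D$ be a homomorphic relative averaging operator with respect to this action. Define on $D'$: $u\prec_\perp v=u\prec' v$, $u\succ_\perp v=u\succ' v$, $u\prec^T_\vdash v=Tu\prec_l v$, $u\prec^T_\dashv v=u\prec_r Tv$, $u\succ^T_\vdash v=Tu\succ_l v$, $u\succ^T_\dashv v=u\succ_r Tv$. Then $(D',\prec_\perp,\succ_\perp,\prec^T_\vdash,\prec^T_\dashv,\succ^T_\vdash,\succ^T_\dashv,\alpha')$ is a Hom-six-dendriform algebra.
   Context: All vector spaces are over a field of characteristic zero. A Hom-dendriform algebra is $(D,\prec,\succ,\alpha)$ with $\prec,\succ$ bilinear and $\alpha$ linear such that for all $x,y,z$: $\alpha(x)\prec(y\prec z+y\succ z)=(x\prec y)\prec\alpha(z)$; $\alpha(x)\succ(y\prec z)=(x\succ y)\prec\alpha(z)$; $\alpha(x)\succ(y\succ z)=(x\prec y+x\succ y)\succ\alpha(z)$. A representation of $(D,\prec,\succ,\alpha)$ on $V$ is a linear $\beta:V\to V$ with bilinear $\prec_l,\succ_l:D\times V\to V$, $\prec_r,\succ_r:V\times D\to V$ such that for all $x,y\in D$, $m\in V$: $(x\prec y)\prec_l\beta(m)=\alpha(x)\prec_l(y\prec_l m+y\succ_l m)$; $(x\succ y)\prec_l\beta(m)=\alpha(x)\succ_l(y\prec_l m)$; $\alpha(x)\succ_l(y\succ_l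 m)=(x\prec y+x\succ y)\succ_l\beta(m)$; $\beta(m)\prec_r(x\prec y+x\succ y)=(m\prec_r x)\prec_r\alpha(y)$; $\beta(m)\succ_r(x\prec y)=(m\succ_r x)\prec_r\alpha(y)$; $(m\prec_r x+m\succ_r x)\succ_r\alpha(y)=\beta(m)\succ_r(x\succ y)$; $(x\prec_l m)\prec_r\alpha(y)=\alpha(x)\prec_l(m\prec_r y+m\succ_r y)$; $(x\succ_l m)\prec_r\alpha(y)=\alpha(x)\succ_l(m\prec_r y)$; $(x\prec_l m+x\succ_l m)\succ_r\alpha(y)=\alpha(x)\succ_l(m\succ_r y)$. An action of $D$ on $D'$ is a representation $(D',\prec_l,\succ_l,\prec_r,\succ_r,\alpha')$ of $D$ (with $\beta=\alpha'$) such that for all $x,y,z\in D$, $u,v,w\in D'$: $(x\prec_l v)\prec'\alpha'(w)=\alpha(x)\prec_l(v\prec' w+v\succ' w)$; $(x\succ_l v)\prec'\alpha'(w)=\alpha(x)\succ_l(v\prec' w)$; $\alpha(x)\succ_l(v\succ' w)=(x\prec_l v+x\succ_l v)\succ'\alpha'(w)$; $(u\prec_r y)\prec'\alpha'(w)=\alpha'(u)\prec'(y\prec_l w+y\succ_l w)$; $(u\succ_r y)\prec'\alpha'(w)=\alpha'(u)\succ'(y\prec_l w)$; $\alpha'(u)\succ'(y\succ_l w)=(u\prec_r y+u\succ_r y)\succ'\alpha'(w)$; $(u\prec' v)\prec_r\alpha(z)=\alpha'(u)\prec'(v\prec_r z+v\succ_r z)$; $(u\succ' v)\prec_r\alpha(z)=\alpha'(u)\succ'(v\prec_r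 z)$; $\alpha'(u)\succ'(v\succ_r z)=(u\prec' v+u\succ' v)\succ_r\alpha(z)$. A homomorphic relative averaging operator is a linear $T:D'\to D$ such that $Tu\prec Tv=T(Tu\prec_l v)=T(u\prec_r Tv)$ and $Tu\succ Tv=T(Tu\succ_l v)=T(u\succ_r Tv)$ for all $u,v\in D'$, $T\circ\alpha'=\alpha\circ T$, and $T(u\prec' v)=Tu\prec Tv$, $T(u\succ' v)=Tu\succ Tv$ for all $u,v\in D'$. A Hom-quadri-dendriform algebra is $(E,\prec_\vdash,\prec_\dashv,\succ_\vdash,\succ_\dashv,\gamma)$ with four bilinear operations and $\gamma$ linear such that for all $x,y,z$: (Q1) $(x\prec_\vdash y)\prec_\vdash\gamma(z)=(x\prec_\dashv y)\prec_\vdash\gamma(z)=\gamma(x)\prec_\vdash(y\prec_\vdash z+y\succ_\vdash z)$; (Q2) $(x\succ_\vdash y)\prec_\vdash\gamma(z)=(x\succ_\dashv y)\prec_\vdash\gamma(z)=\gamma(x)\succ_\vdash(y\prec_\vdash z)$; (Q3) $\gamma(x)\succ_\vdash(y\succ_\vdash z)=(x\prec_\vdash y+x\succ_\vdash y)\succ_\vdash\gamma(z)=(x\prec_\dashv y+x\succ_\dashv y)\succ_\vdash\gamma(z)$; (Q4) $\gamma(x)\succ_\vdash(y\succ_\vdash z)=(x\prec_\dashv y+x\succ_\vdash y)\succ_\vdash\gamma(z)=(x\prec_\vdash y+x\succ_\dashv y)\succ_\vdash\gamma(z)$; (Q5) $(x\prec_\vdash y)\prec_\dashv\gamma(z)=\gamma(x)\prec_\vdash(y\prec_\dashv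 z+y\succ_\dashv z)$; (Q6) $(x\succ_\vdash y)\prec_\dashv\gamma(z)=\gamma(x)\succ_\vdash(y\prec_\dashv z)$; (Q7) $\gamma(x)\succ_\vdash(y\succ_\dashv z)=(x\prec_\vdash y+x\succ_\vdash y)\succ_\dashv\gamma(z)$; (Q8) $(x\prec_\dashv y)\prec_\dashv\gamma(z)=\gamma(x)\prec_\dashv(y\prec_\vdash z+y\succ_\vdash z)=\gamma(x)\prec_\dashv(y\prec_\dashv z+y\succ_\dashv z)$; (Q9) $(x\prec_\dashv y)\prec_\dashv\gamma(z)=\gamma(x)\prec_\dashv(y\prec_\vdash z+y\succ_\dashv z)=\gamma(x)\prec_\dashv(y\prec_\dashv z+y\succ_\vdash z)$; (Q10) $(x\succ_\dashv y)\prec_\dashv\gamma(z)=\gamma(x)\succ_\dashv(y\prec_\vdash z)=\gamma(x)\succ_\dashv(y\prec_\dashv z)$; (Q11) $\gamma(x)\succ_\dashv(y\succ_\vdash z)=\gamma(x)\succ_\dashv(y\succ_\dashv z)=(x\prec_\dashv y+x\succ_\dashv y)\succ_\dashv\gamma(z)$. A Hom-six-dendriform algebra is $(E,\prec_\perp,\succ_\perp,\prec_\vdash,\prec_\dashv,\succ_\vdash,\succ_\dashv,\gamma)$ such that $(E,\prec_\perp,\succ_\perp,\gamma)$ is Hom-dendriform, $(E,\prec_\vdash,\prec_\dashv,\succ_\vdash,\succ_\dashv,\gamma)$ is Hom-quadri-dendriform, and for all $x,y,z$: (S1) $(x\prec_\vdash y)\prec_\perp\gamma(z)=\gamma(x)\prec_\vdash(y\prec_\perp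 z+y\succ_\perp z)$; (S2) $(x\succ_\vdash y)\prec_\perp\gamma(z)=\gamma(x)\succ_\vdash(y\prec_\perp z)$; (S3) $\gamma(x)\succ_\vdash(y\succ_\perp z)=(x\prec_\vdash y+x\succ_\vdash y)\succ_\perp\gamma(z)$; (S4) $(x\prec_\dashv y)\prec_\perp\gamma(z)=\gamma(x)\prec_\perp(y\prec_\vdash z+y\succ_\vdash z)$; (S5) $(x\succ_\dashv y)\prec_\perp\gamma(z)=\gamma(x)\succ_\perp(y\prec_\vdash z)$; (S6) $\gamma(x)\succ_\perp(y\succ_\vdash z)=(x\prec_\dashv y+x\succ_\dashv y)\succ_\perp\gamma(z)$; (S7) $(x\prec_\perp y)\prec_\dashv\gamma(z)=\gamma(x)\prec_\perp(y\prec_\dashv z+y\succ_\dashv z)$; (S8) $(x\succ_\perp y)\prec_\dashv\gamma(z)=\gamma(x)\succ_\perp(y\prec_\dashv z)$; (S9) $\gamma(x)\succ_\perp(y\succ_\dashv z)=(x\prec_\perp y+x\succ_\perp y)\succ_\dashv\gamma(z)$; (S10) $(x\prec_\perp y)\prec_\vdash\gamma(z)=(x\prec_\vdash y)\prec_\vdash\gamma(z)=(x\prec_\dashv y)\prec_\vdash\gamma(z)$; (S11) $(x\succ_\perp y)\prec_\vdash\gamma(z)=(x\succ_\vdash y)\prec_\vdash\gamma(z)=(x\succ_\dashv y)\prec_\vdash\gamma(z)$; (S12) $(x\prec_\perp y)\succ_\vdash\gamma(z)=(x\prec_\vdash y)\succ_\vdash\gamma(z)=(x\prec_\dashv y)\succ_\vdash\gamma(z)$;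 (S13) $(x\succ_\perp y)\succ_\vdash\gamma(z)=(x\succ_\vdash y)\succ_\vdash\gamma(z)=(x\succ_\dashv y)\succ_\vdash\gamma(z)$; (S14) $\gamma(x)\prec_\dashv(y\prec_\perp z)=\gamma(x)\prec_\dashv(y\prec_\vdash z)=\gamma(x)\prec_\dashv(y\prec_\dashv z)$; (S15) $\gamma(x)\succ_\dashv(y\prec_\perp z)=\gamma(x)\succ_\dashv(y\prec_\vdash z)=\gamma(x)\succ_\dashv(y\prec_\dashv z)$; (S16) $\gamma(x)\succ_\dashv(y\succ_\perp z)=\gamma(x)\succ_\dashv(y\succ_\vdash z)=\gamma(x)\succ_\dashv(y\succ_\dashv z)$; (S17) $\gamma(x)\prec_\dashv(y\succ_\perp z)=\gamma(x)\prec_\dashv(y\succ_\vdash z)=\gamma(x)\prec_\dashv(y\succ_\dashv z)$. *)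

From HB Require Import structures.
From mathcomp Require Import all_boot all_order all_algebra.
Set Implicit Arguments. Unset Strict Implicit. Unset Printing Implicit Defensive.
Import GRing.Theory.
Local Open Scope ring_scope.

Section Defs.
Variable K : fieldType.

Definition is_lin (U V : lmodType K) (f : U -> V) : Prop :=
  forall (a : K) (x y : U), f (a *: x + y) = a *: f x + f y.

Definition is_bilin (U V W : lmodType K) (f : U -> V -> W) : Prop :=
  (forall u, is_lin (f u)) /\ (forall v, is_lin (fun u => f u v)).

Definition HomDendriform (D : lmodType K) (prec succ : D -> D -> D) (alpha : D -> D) : Prop :=
  (is_bilin prec /\ is_bilin succ /\ is_lin alpha /\
  forall x y z : D,
  (prec (alpha x) (prec y z + succ y z) = prec (prec x y) (alpha z) /\
      succ (alpha x) (prec y z) = prec (succ x y) (alpha z) /\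
      succ (alpha x) (succ y z) = succ (prec x y + succ x y) (alpha z))).

Definition HomDendRep (D V : lmodType K) (prec succ : D -> D -> D) (alpha : D -> D)
  (precl succl : D -> V -> V) (precr succr : V -> D -> V) (beta : V -> V) : Prop :=
  (is_lin beta /\ is_bilin precl /\ is_bilin succl /\ is_bilin precr /\ is_bilin succr /\
  forall (x y : D) (m : V),
  (precl (prec x y) (beta m) = precl (alpha x) (precl y m + succl y m) /\
      precl (succ x y) (beta m) = succl (alpha x) (precl y m) /\
      succl (alpha x) (succl y m) = succl (prec x y + succ x y) (beta m) /\
      precr (beta m) (prec x y + succ x y) = precr (precr m x) (alpha y) /\
      succr (beta m) (prec x y) = precr (succr m x) (alpha y) /\
      succr (precr m x + succr m x) (alpha y) = succr (beta m) (succ x y) /\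
      precr (precl x m) (alpha y) = precl (alpha x) (precr m y + succr m y) /\
      precr (succl x m) (alpha y) = succl (alpha x) (precr m y) /\
      succr (precl x m + succl x m) (alpha y) = succl (alpha x) (succr m y))).

Definition HomDendAction (D D' : lmodType K) (prec succ : D -> D -> D) (alpha : D -> D)
  (prec' succ' : D' -> D' -> D') (alpha' : D' -> D')
  (precl succl : D -> D' -> D') (precr succr : D' -> D -> D') : Prop :=
  HomDendRep prec succ alpha precl succl precr succr alpha' /\
  forall (x y z : D) (u v w : D'),
  (prec' (precl x v) (alpha' w) = precl (alpha x) (prec' v w + succ' v w) /\
      prec' (succl x v) (alpha' w) = succl (alpha x) (prec' v w) /\
      succl (alpha x) (succ' v w) = succ' (precl x v + succl x v) (alpha' w) /\
      prec' (precr u y) (alpha' w) = prec' (alpha' u) (precl y w + succl y w) /\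
      prec' (succr u y) (alpha' w) = succ' (alpha' u) (precl y w) /\
      succ' (alpha' u) (succl y w) = succ' (precr u y + succr u y) (alpha' w) /\
      precr (prec' u v) (alpha z) = prec' (alpha' u) (precr v z + succr v z) /\
      precr (succ' u v) (alpha z) = succ' (alpha' u) (precr v z) /\
      succ' (alpha' u) (succr v z) = succr (prec' u v + succ' u v) (alpha z)).

Definition HomRelAveragingOp (D D' : lmodType K) (prec succ : D -> D -> D) (alpha : D -> D)
  (prec' succ' : D' -> D' -> D') (alpha' : D' -> D')
  (precl succl : D -> D' -> D') (precr succr : D' -> D -> D') (T : D' -> D) : Prop :=
  [/\ is_lin T,
      (forall u v : D',
        prec (T u) (T v) = T (precl (T u) v) /\ T (precl (T u) v) = T (precr u (T v))),
      (forall u v : D',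
        succ (T u) (T v) = T (succl (T u) v) /\ T (succl (T u) v) = T (succr u (T v))),
      (forall u : D', T (alpha' u) = alpha (T u)) &
      (forall u v : D',
        T (prec' u v) = prec (T u) (T v) /\ T (succ' u v) = succ (T u) (T v))].

(* Hom-quadri-dendriform algebra (E, pv, pd, sv, sd, gamma) with
   pv = prec_|-, pd = prec_-|, sv = succ_|-, sd = succ_-| *)
Definition HomQuadriDendriform (E : lmodType K) (pv pd sv sd : E -> E -> E) (g : E -> E) : Prop :=
  (is_bilin pv /\ is_bilin pd /\ is_bilin sv /\ is_bilin sd /\ is_lin g /\
  forall x y z : E,
  ( pv (pv x y) (g z) = pv (pd x y) (g z) /\ pv (pd x y) (g z) = pv (g x) (pv y z + sv y z) /\
      pv (sv x y) (g z) = pv (sd x y) (g z) /\ pv (sd x y) (g z) = sv (g x) (pv y z) /\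
      sv (g x) (sv y z) = sv (pv x y + sv x y) (g z) /\ sv (pv x y + sv x y) (g z) = sv (pd x y + sd x y) (g z) /\
      sv (g x) (sv y z) = sv (pd x y + sv x y) (g z) /\ sv (pd x y + sv x y) (g z) = sv (pv x y + sd x y) (g z) /\
      pd (pv x y) (g z) = pv (g x) (pd y z + sd y z) /\
      pd (sv x y) (g z) = sv (g x) (pd y z) /\
      sv (g x) (sd y z) = sd (pv x y + sv x y) (g z) /\
      pd (pd x y) (g z) = pd (g x) (pv y z + sv y z) /\ pd (g x) (pv y z + sv y z) = pd (g x) (pd y z + sd y z) /\
      pd (pd x y) (g z) = pd (g x) (pv y z + sd y z) /\ pd (g x) (pv y z + sd y z) = pd (g x) (pd y z + sv y z) /\
      pd (sd x y) (g z) = sd (g x) (pv y z) /\ sd (g x) (pv y z) = sd (g x) (pd y z) /\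
      sd (g x) (sv y z) = sd (g x) (sd y z) /\ sd (g x) (sd y z) = sd (pd x y + sd x y) (g z))).

(* Hom-six-dendriform algebra (E, pp, sp, pv, pd, sv, sd, gamma), pp = prec_perp, sp = succ_perp *)
Definition HomSixDendriform (E : lmodType K) (pp sp pv pd sv sd : E -> E -> E) (g : E -> E) : Prop :=
  (HomDendriform pp sp g /\ HomQuadriDendriform pv pd sv sd g /\
  forall x y z : E,
  ( pp (pv x y) (g z) = pv (g x) (pp y z + sp y z) /\
      pp (sv x y) (g z) = sv (g x) (pp y z) /\
      sv (g x) (sp y z) = sp (pv x y + sv x y) (g z) /\
      pp (pd x y) (g z) = pp (g x) (pv y z + sv y z) /\
      pp (sd x y) (g z) = sp (g x) (pv y z) /\
      sp (g x) (sv y z) = sp (pd x y + sd x y) (g z) /\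
      pd (pp x y) (g z) = pp (g x) (pd y z + sd y z) /\
      pd (sp x y) (g z) = sp (g x) (pd y z) /\
      sp (g x) (sd y z) = sd (pp x y + sp x y) (g z) /\
  ( pv (pp x y) (g z) = pv (pv x y) (g z) /\ pv (pv x y) (g z) = pv (pd x y) (g z) /\
      pv (sp x y) (g z) = pv (sv x y) (g z) /\ pv (sv x y) (g z) = pv (sd x y) (g z) /\
      sv (pp x y) (g z) = sv (pv x y) (g z) /\ sv (pv x y) (g z) = sv (pd x y) (g z) /\
      sv (sp x y) (g z) = sv (sv x y) (g z) /\ sv (sv x y) (g z) = sv (sd x y) (g z) /\
      pd (g x) (pp y z) = pd (g x) (pv y z) /\ pd (g x) (pv y z) = pd (g x) (pd y z) /\
      sd (g x) (pp y z) = sd (g x) (pv y z) /\ sd (g x) (pv y z) = sd (g x) (pd y z) /\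
      sd (g x) (sp y z) = sd (g x) (sv y z) /\ sd (g x) (sv y z) = sd (g x) (sd y z) /\
      pd (g x) (sp y z) = pd (g x) (sv y z) /\ pd (g x) (sv y z) = pd (g x) (sd y z)))).

End Defs.

From HB Require Import structures.
From mathcomp Require Import all_boot all_order all_algebra.
Import GRing.Theory.
Local Open Scope ring_scope.

(* Every new operation on D' is intertwined by T with an operation of D:
   T (u ≺_⊢ v) = T (u ≺_⊣ v) = T (u ≺_⊥ v) = Tu ≺ Tv, likewise for ≻, and
   T ∘ α' = α ∘ T.  Pushing T inside the first argument of the left actions
   (resp. the second argument of the right actions), each Hom-quadri- and
   Hom-six-dendriform identity in x, y, z becomes a representation or action
   axiom of D on D' evaluated at Tx, Ty, Tz. *)

Section Linearity.
Context {K : fieldType}.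

Lemma is_linD {U V : lmodType K} {f : U -> V} :
  is_lin f -> forall x y, f (x + y) = f x + f y.
Proof. by move=> Lf x y; have := Lf 1 x y; rewrite !scale1r. Qed.

Lemma is_bilin_compl {U V W X : lmodType K} {f : V -> W -> X} {T : U -> V} :
  is_lin T -> is_bilin f -> is_bilin (fun u w => f (T u) w).
Proof.
move=> LT [Bl Br]; split=> [u|w] a x y /=; first exact: Bl.
by rewrite LT Br.
Qed.

Lemma is_bilin_compr {U V W X : lmodType K} {f : W -> V -> X} {T : U -> V} :
  is_lin T -> is_bilin f -> is_bilin (fun w u => f w (T u)).
Proof.
move=> LT [Bl Br]; split=> [w|u] a x y /=; last exact: Br.
by rewrite LT Bl.
Qed.

End Linearity.

Section InducedSixDendriform.
Variables (K : fieldType) (D D' : lmodType K).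
Variables (prec succ : D -> D -> D) (alpha : D -> D).
Variables (prec' succ' : D' -> D' -> D') (alpha' : D' -> D').
Variables (precl succl : D -> D' -> D') (precr succr : D' -> D -> D').
Variable T : D' -> D.
Hypothesis HT :
  HomRelAveragingOp prec succ alpha prec' succ' alpha' precl succl precr succr T.

Lemma averaging_lin : is_lin T.
Proof. by case: HT. Qed.

Lemma averagingD u v : T (u + v) = T u + T v.
Proof. by rewrite (is_linD averaging_lin). Qed.

Lemma averaging_precl u v : T (precl (T u) v) = prec (T u) (T v).
Proof. by case: HT => _ /(_ u v) []. Qed.

Lemma averaging_precr u v : T (precr u (T v)) = prec (T u) (T v).
Proof. by case: HT => _ /(_ u v) [-> ->]. Qed.

Lemma averaging_succl u v : T (succl (T u) v) = succ (T u) (T v).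
Proof. by case: HT => _ _ /(_ u v) []. Qed.

Lemma averaging_succr u v : T (succr u (T v)) = succ (T u) (T v).
Proof. by case: HT => _ _ /(_ u v) [-> ->]. Qed.

Lemma averaging_alpha u : T (alpha' u) = alpha (T u).
Proof. by case: HT. Qed.

Lemma averaging_prec' u v : T (prec' u v) = prec (T u) (T v).
Proof. by case: HT => _ _ _ _ /(_ u v) []. Qed.

Lemma averaging_succ' u v : T (succ' u v) = succ (T u) (T v).
Proof. by case: HT => _ _ _ _ /(_ u v) []. Qed.

Lemma quadri_dendriform_averaging :
  HomDendRep prec succ alpha precl succl precr succr alpha' ->
  HomQuadriDendriform
    (fun u v => precl (T u) v) (fun u v => precr u (T v))
    (fun u v => succl (T u) v) (fun u v => succr u (T v)) alpha'.
Proof.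
move=> [La [Bpl [Bsl [Bpr [Bsr Rep]]]]].
have LT := averaging_lin.
do 4 (split; first by apply: is_bilin_compl || apply: is_bilin_compr).
split=> // x y z /=.
have [R1 [R2 [R3 _]]] := Rep (T x) (T y) z.
have [_ [_ [_ [R4 [R5 [R6 _]]]]]] := Rep (T y) (T z) x.
have [_ [_ [_ [_ [_ [_ [R7 [R8 R9]]]]]]]] := Rep (T x) (T z) y.
rewrite ?averagingD ?averaging_alpha ?averaging_precl ?averaging_precr
        ?averaging_succl ?averaging_succr.
by repeat split; first [done | symmetry].
Qed.

Lemma six_dendriform_averaging :
  HomDendriform prec' succ' alpha' ->
  HomDendAction prec succ alpha prec' succ' alpha' precl succl precr succr ->
  HomSixDendriform prec' succ'
    (fun u v => precl (T u) v) (fun u v => precr u (T v))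
    (fun u v => succl (T u) v) (fun u v => succr u (T v)) alpha'.
Proof.
move=> HD' [HRep Act]; split; first exact: HD'.
split; first exact: quadri_dendriform_averaging.
move=> x y z /=.
have [A1 [A2 [A3 [A4 [A5 [A6 [A7 [A8 A9]]]]]]]] := Act (T x) (T y) (T z) x y z.
rewrite ?averagingD ?averaging_alpha ?averaging_precl ?averaging_precr
        ?averaging_succl ?averaging_succr ?averaging_prec' ?averaging_succ'.
by repeat split; first [done | symmetry].
Qed.

End InducedSixDendriform.

Theorem theorem4p8 (K : fieldType) (charK0 : [pchar K] =i pred0)
  (D D' : lmodType K)
  (prec succ : D -> D -> D) (alpha : D -> D)
  (prec' succ' : D' -> D' -> D') (alpha' : D' -> D')
  (precl succl : D -> D' -> D') (precr succr : D' -> D -> D')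
  (T : D' -> D) :
  HomDendriform prec succ alpha ->
  HomDendriform prec' succ' alpha' ->
  HomDendAction prec succ alpha prec' succ' alpha' precl succl precr succr ->
  HomRelAveragingOp prec succ alpha prec' succ' alpha' precl succl precr succr T ->
  HomSixDendriform prec' succ'
    (fun u v => precl (T u) v) (fun u v => precr u (T v))
    (fun u v => succl (T u) v) (fun u v => succr u (T v)) alpha'.
Proof.
move=> _ HD' Hact HT.
exact: six_dendriform_averaging HT HD' Hact.
Qed.
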